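(* Let $Q$ be a complete quiver with at least two frozen vertices, and let $j\neq k$ be mutable vertices such that $j$ is cycle-preserving for $Q$ and $k$ is cycle-preserving for $\mu_j(Q)$. If $j$ is neither red nor green in $Q$, then $j$ is red or green in $\mu_k(\mu_j(Q))$.
   Context: A quiver is a finite directed multigraph with no loops and no oriented 2-cycles, whose vertex set is partitioned into mutable and frozen vertices; arrows between two frozen vertices are ignored. $b_{ik}$ = number of arrows $i\to k$ minus number of arrows $k\to i$; $Q|_S$ is the induced subquiver on $S$. Mutation $\mu_j$ at mutable $j$: for each path $i\to j\to k$ add $b_{ij}b_{jk}$ arrows $i\to k$, reverse all arrows at $j$, cancel 2-cycles. Complete: at least one arrow between every pair of vertices at least one of which is mutable. A 3-vertex (sub)quiver is an oriented 3-cycle if it has at most one frozen vertex and its underlying directed graph is not acyclic. A mutable vertex $j$ is cycle-preserving for $Q$ if whenever $Q|_{\{i,j,k\}}$ is an oriented 3-cycle containing $j$, so is $\mu_j(Q)|_{\{i,j,k\}}$. A mutable vertex adjacent to at least one frozen vertex is red (resp. green) if all arrows between it and frozen vertices point towards (resp. away from) it. *)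

From mathcomp Require Import all_boot all_order all_algebra.
Set Implicit Arguments. Unset Strict Implicit. Unset Printing Implicit Defensive.
Import Order.TTheory GRing.Theory Num.Theory.
Local Open Scope ring_scope.

(* A quiver on the finite vertex type V with frozen set fr is encoded by its
   signed arrow count B i k = b_ik = #(i -> k) - #(k -> i).  Since a quiver
   has no loops and no oriented 2-cycles, B determines the quiver, and B is
   skew-symmetric.  Vertices not in fr are mutable. *)
Definition is_quiver (V : finType) (B : V -> V -> int) : Prop :=
  forall i k, B i k = - B k i.

Definition narr (V : finType) (B : V -> V -> int) (i k : V) : int :=
  Num.max (B i k) 0.

(* Mutation at j: for each path i -> j -> k add b_ij b_jk arrows i -> k,
   reverse all arrows at j, cancel 2-cycles. *)
Definition mu (V : finType) (j : V) (B : V -> V -> int) : V -> V -> int :=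
  fun i k =>
    if (i == j) || (k == j) then - B i k
    else B i k + narr B i j * narr B j k - narr B k j * narr B j i.

Definition complete (V : finType) (fr : {set V}) (B : V -> V -> int) : Prop :=
  forall i k, i != k -> (i \notin fr) || (k \notin fr) -> B i k != 0.

(* Q|_{i,j,k} is an oriented 3-cycle: three distinct vertices, at most one
   frozen, and the induced directed graph is not acyclic (for three vertices
   in a quiver without loops and 2-cycles, this means it is a directed
   3-cycle in one of the two orientations). *)
Definition oriented3cycle (V : finType) (fr : {set V}) (B : V -> V -> int)
  (i j k : V) : Prop :=
  [/\ i != j, j != k, i != k,
      (#|[set x in [:: i; j; k] | x \in fr]| <= 1)%N &
      (0 < B i j /\ 0 < B j k /\ 0 < B k i) \/
      (0 < B i k /\ 0 < B k j /\ 0 < B j i)].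

Definition cycle_preserving (V : finType) (fr : {set V}) (B : V -> V -> int)
  (j : V) : Prop :=
  j \notin fr /\
  forall i k, oriented3cycle fr B i j k -> oriented3cycle fr (mu j B) i j k.

Definition red (V : finType) (fr : {set V}) (B : V -> V -> int) (j : V) : Prop :=
  [/\ j \notin fr, exists2 f, f \in fr & B j f != 0 &
      forall f, f \in fr -> B j f <= 0].

Definition green (V : finType) (fr : {set V}) (B : V -> V -> int) (j : V) : Prop :=
  [/\ j \notin fr, exists2 f, f \in fr & B j f != 0 &
      forall f, f \in fr -> 0 <= B j f].

From mathcomp Require Import all_boot all_order all_algebra.
From mathcomp Require Import zify ring.
Set Implicit Arguments. Unset Strict Implicit. Unset Printing Implicit Defensive.
Import Order.TTheory GRing.Theory Num.Theory.
Local Open Scope ring_scope.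

(* Reversing all arrows exchanges red and green and preserves all the other
   hypotheses, so we may assume j -> k in Q; we show that then every frozen h
   satisfies h -> j in mu_k (mu_j Q), i.e. j becomes red.
   If j -> h in Q, then mu_j reverses this arrow and mu_k can only add arrows
   h -> j, along the paths h -> k -> j of mu_j Q.
   If h -> j in Q, then h -> k in mu_j Q: otherwise h -> j -> k -> h is an
   oriented 3-cycle of Q that mu_j would break.  So j -> h -> k -> j is an
   oriented 3-cycle of mu_j Q; mu_k keeps it a 3-cycle while reversing
   k -> j, which forces the arrow h -> j in mu_k (mu_j Q). *)

Section Mutation.
Variables (V : finType) (B : V -> V -> int).

Lemma narr_pos i k : 0 < B i k -> narr B i k = B i k.
Proof. by move=> Bik; apply/max_idPl; rewrite ltW. Qed.

Lemma narr_npos i k : B i k <= 0 -> narr B i k = 0.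
Proof. by move=> Bik; apply/max_idPr. Qed.

Lemma narr_ge0 i k : 0 <= narr B i k.
Proof. by rewrite /narr le_max lexx orbT. Qed.

Lemma mu_quiver j : is_quiver B -> is_quiver (mu j B).
Proof.
move=> hB i k; rewrite /mu orbC (hB i k).
by case: ifP => _; ring.
Qed.

Lemma mu_at_l j h : mu j B j h = - B j h.
Proof. by rewrite /mu eqxx. Qed.

Lemma mu_at_r j h : mu j B h j = - B h j.
Proof. by rewrite /mu eqxx orbT. Qed.

Lemma mu_off j h k : h != j -> k != j ->
  mu j B h k = B h k + narr B h j * narr B j k - narr B k j * narr B j h.
Proof. by move=> /negPf hj /negPf kj; rewrite /mu hj kj. Qed.

Lemma mu_ext (B' : V -> V -> int) j : B =2 B' -> mu j B =2 mu j B'.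
Proof. by move=> eB i k; rewrite /mu /narr !eB. Qed.

End Mutation.

Lemma card_frozen_le1 (V : finType) (fr : {set V}) (s : seq V) h :
  (forall x, x \in s -> x \in fr -> x = h) -> (#|[set x in s | x \in fr]| <= 1)%N.
Proof.
move=> frozen_h; rewrite -(cards1 h); apply: subset_leq_card.
by apply/subsetP => x; rewrite !inE => /andP[xs xf]; rewrite (frozen_h x xs xf).
Qed.

Section Opposite.
Variables (V : finType) (fr : {set V}).

Definition opp_quiver (B : V -> V -> int) : V -> V -> int := fun i k => - B i k.

Lemma oriented3cycle_ext (B B' : V -> V -> int) i j k :
  B =2 B' -> oriented3cycle fr B i j k -> oriented3cycle fr B' i j k.
Proof. by move=> eB; rewrite /oriented3cycle !eB. Qed.

Lemma cycle_preserving_ext (B B' : V -> V -> int) j :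
  B =2 B' -> cycle_preserving fr B j -> cycle_preserving fr B' j.
Proof.
move=> eB [jf pj]; split=> // i k.
move/(oriented3cycle_ext (fun x y => esym (eB x y)))/pj.
exact/oriented3cycle_ext/mu_ext.
Qed.

Lemma opp_quiver_quiver B : is_quiver B -> is_quiver (opp_quiver B).
Proof. by move=> hB i k; rewrite /opp_quiver (hB i k). Qed.

Lemma complete_opp B : complete fr B -> complete fr (opp_quiver B).
Proof. by move=> hC i k ik ifr; rewrite oppr_eq0 hC. Qed.

Lemma narr_opp B i k : is_quiver B -> narr (opp_quiver B) i k = narr B k i.
Proof. by move=> hB; rewrite /narr /opp_quiver (hB i k) opprK. Qed.

Lemma mu_opp B j : is_quiver B -> mu j (opp_quiver B) =2 opp_quiver (mu j B).
Proof.
move=> hB i k; rewrite /mu !narr_opp // /opp_quiver.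
by case: ifP => _; ring.
Qed.

Lemma oriented3cycle_opp B i j k : is_quiver B ->
  oriented3cycle fr (opp_quiver B) i j k <-> oriented3cycle fr B i j k.
Proof.
move=> hB; have skew x y : (B x y < 0) = (0 < B y x) by rewrite (hB x y) oppr_lt0.
rewrite /oriented3cycle /opp_quiver !oppr_gt0 !skew.
by split=> -[? ? ? ? [[? [? ?]] | [? [? ?]]]]; split=> //; [right | left | right | left].
Qed.

Lemma cycle_preserving_opp B j : is_quiver B ->
  cycle_preserving fr B j -> cycle_preserving fr (opp_quiver B) j.
Proof.
move=> hB [jf pj]; split=> // i k /(oriented3cycle_opp _ _ _ hB)/pj.
move/(oriented3cycle_opp _ _ _ (mu_quiver j hB)).2.
by apply: oriented3cycle_ext => x y; rewrite mu_opp.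
Qed.

End Opposite.

Section ArrowFromJToK.
Variables (V : finType) (fr : {set V}) (B : V -> V -> int) (j k h : V).
Hypotheses (hB : is_quiver B) (hC : complete fr B).
Hypotheses (jf : j \notin fr) (kf : k \notin fr) (hf : h \in fr).
Hypotheses (pj : cycle_preserving fr B j) (pk : cycle_preserving fr (mu j B) k).
Hypothesis Bjk : 0 < B j k.

Local Notation C := (mu j B).
Local Notation D := (mu k (mu j B)).

Let skew x y : (B x y < 0) = (0 < B y x).
Proof. by rewrite (hB x y) oppr_lt0. Qed.

Let kj : k != j.
Proof. by apply: contraTneq Bjk => ->; have := hB j j; lia. Qed.

Let hj : h != j.
Proof. by apply: contraTneq hf => ->. Qed.

Let hk : h != k.
Proof. by apply: contraTneq hf => ->. Qed.

Let frozen_triple (s : seq V) :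
  {subset s <= [:: h; j; k]} -> (#|[set x in s | x \in fr]| <= 1)%N.
Proof.
move=> sub; apply: (card_frozen_le1 (h := h)) => x /sub.
by rewrite !inE => /or3P[]/eqP-> //; rewrite ?(negPf jf) ?(negPf kf).
Qed.

Lemma mu_frozen_to_k : B j h < 0 -> 0 < C h k.
Proof.
move=> Bjh; have Bhj : 0 < B h j by rewrite -skew.
rewrite ltNge; apply/negP => Chk_le0.
have Bkh : 0 < B k h.
  rewrite -skew; move: Chk_le0.
  rewrite mu_off // (narr_pos Bhj) (narr_pos Bjk) narr_npos ?mul0r ?subr0; last first.
    by rewrite (hB k j) oppr_le0 ltW.
  by nia.
have cycle_hjk : oriented3cycle fr B h j k.
  by split; rewrite ?(eq_sym j) //; [exact: frozen_triple (fun x xs => xs) | left].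
have [_ _ _ _ [[Chj _] | [Chk _]]] := pj.2 h k cycle_hjk.
  by move: Chj; rewrite mu_at_r oppr_gt0 skew ltNge ltW.
by move: Chk_le0; rewrite leNgt Chk.
Qed.

Lemma mu_mu_frozen_to_j : B j h < 0 -> 0 < D h j.
Proof.
move=> Bjh; have Chk := mu_frozen_to_k Bjh.
have cycle_jkh : oriented3cycle fr C j k h.
  split; rewrite 1?eq_sym //.
    by apply: frozen_triple => x; rewrite !inE => /or3P[]->; rewrite ?orbT.
  by right; rewrite mu_at_l mu_at_r !oppr_gt0 Bjh skew Bjk Chk.
have [_ _ _ _ [[_ [_ Dhj]] | [_ [_ Dkj]]]] := pk.2 j h cycle_jkh => //.
by move: Dkj; rewrite mu_at_l mu_at_r opprK -skew ltNge ltW.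
Qed.

Lemma mu_mu_frozen_lt0 : D j h < 0.
Proof.
have : B j h != 0 by apply: hC; rewrite ?jf // eq_sym.
case: (ltgtP (B j h) 0) => // [Bjh | Bjh] _.
  by rewrite (mu_quiver k (mu_quiver j hB) j h) oppr_lt0 mu_mu_frozen_to_j.
have Cjk : narr C j k = 0 by rewrite narr_npos // mu_at_l oppr_le0 ltW.
have Ckj : narr C k j = B j k by rewrite narr_pos mu_at_r -(hB j k) // oppr_gt0 skew.
rewrite mu_off ?(eq_sym j) // Cjk Ckj mul0r addr0 mu_at_l.
by have := narr_ge0 C h k; nia.
Qed.

End ArrowFromJToK.

Lemma red_of_frozen_lt0 (V : finType) (fr : {set V}) (B : V -> V -> int) j h0 :
  j \notin fr -> h0 \in fr -> (forall h, h \in fr -> B j h < 0) -> red fr B j.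
Proof.
move=> jf h0f neg; split=> //; first by exists h0; rewrite // lt_eqF ?neg.
by move=> h /neg/ltW.
Qed.

Lemma green_of_frozen_gt0 (V : finType) (fr : {set V}) (B : V -> V -> int) j h0 :
  j \notin fr -> h0 \in fr -> (forall h, h \in fr -> 0 < B j h) -> green fr B j.
Proof.
move=> jf h0f pos; split=> //; first by exists h0; rewrite // gt_eqF ?pos.
by move=> h /pos/ltW.
Qed.

Theorem mainTheorem7 (V : finType) (fr : {set V}) (B : V -> V -> int) (j k : V) :
  is_quiver B ->
  complete fr B ->
  (2 <= #|fr|)%N ->
  j \notin fr -> k \notin fr -> j != k ->
  cycle_preserving fr B j ->
  cycle_preserving fr (mu j B) k ->
  ~ red fr B j -> ~ green fr B j ->
  red fr (mu k (mu j B)) j \/ green fr (mu k (mu j B)) j.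
Proof.
move=> hB hC fr2 jf kf jk pj pk _ _.
have [h0 h0f] : exists h, h \in fr by apply/card_gt0P; apply: leq_trans fr2.
have : B j k != 0 by apply: hC; rewrite ?jf.
case: (ltgtP (B j k) 0) => // Bjk _; [right | left]; last first.
  exact: red_of_frozen_lt0 jf h0f (fun h hf => mu_mu_frozen_lt0 hB hC jf kf hf pj pk Bjk).
have pk' : cycle_preserving fr (mu j (opp_quiver B)) k.
  apply: cycle_preserving_ext (cycle_preserving_opp (mu_quiver j hB) pk) => x y.
  by rewrite mu_opp.
have B'jk : 0 < opp_quiver B j k by rewrite oppr_gt0.
apply: (green_of_frozen_gt0 jf h0f) => h hf.
have := mu_mu_frozen_lt0 (opp_quiver_quiver hB) (complete_opp hC) jf kf hf
  (cycle_preserving_opp hB pj) pk' B'jk.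
by rewrite (mu_ext k (mu_opp j hB)) (mu_opp k (mu_quiver j hB)) oppr_lt0.
Qed.
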